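(* Let $\Gamma$ act by isometries on metric spaces $(X,d_X)$ and $(Y,d_Y)$, and let $\hat X\supseteq X$ be a partial compactification such that the $\Gamma$-action extends to a proper cocompact action on $\hat X\times Y$; let $d_\Gamma$ be a $\Gamma$-invariant proper metric on $\hat X\times Y$ inducing its topology. Let $(x_i,y_i)$ and $(x_i',y_i')$ be sequences in $\hat X\times Y$. If $d_Y(y_i,y_i')\to\infty$, then $d_\Gamma((x_i,y_i),(x_i',y_i'))\to\infty$.
   Context: The action of $\Gamma$ on $\hat X\times Y$ is diagonal; $d_X$, $d_Y$ are $\Gamma$-invariant. A metric is proper if closed bounded sets are compact. *)

From HB Require Import structures.
From mathcomp Require Import all_boot all_order all_algebra.
From mathcomp Require Import all_classical all_reals all_analysis.
From mathcomp Require Import monoid.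
Set Implicit Arguments.
Unset Strict Implicit.
Unset Printing Implicit Defensive.
Import Order.TTheory GRing.Theory Num.Theory.
Local Open Scope classical_set_scope.
Local Open Scope ring_scope.

Definition is_action (G : groupType) (T : Type) (act : G -> T -> T) : Prop :=
  (forall t, act (@one G) t = t) /\
  (forall (g h : G) t, act (@mul G g h) t = act g (act h t)).

Definition is_metric (R : realType) (T : Type) (d : T -> T -> R) : Prop :=
  [/\ forall x y, 0 <= d x y,
      forall x y, d x y = 0 <-> x = y,
      forall x y, d x y = d y x &
      forall x y z, d x z <= d x y + d y z].

Definition isometric_action (R : realType) (G : groupType) (M : metricType R)
  (act : G -> M -> M) : Prop :=
  is_action act /\ forall g a b, mdist (act g a) (act g b) = mdist a b.

Definition metric_induces_topology (R : realType) (T : topologicalType)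
  (d : T -> T -> R) : Prop :=
  forall (p : T) (U : set T),
    nbhs p U <-> exists2 e : R, 0 < e & [set q | d p q < e] `<=` U.

Definition proper_metric (R : realType) (T : topologicalType)
  (d : T -> T -> R) : Prop :=
  forall A : set T, closed A ->
    (exists (c : T) (r : R), forall a, A a -> d c a <= r) -> compact A.

Definition partial_compactification (X Xh : topologicalType) (iota : X -> Xh)
  : Prop :=
  [/\ injective iota, continuous iota,
      (forall U : set X, open U -> open (iota @` U)) &
      closure (range iota) = setT].

Definition proper_action (G : groupType) (T : topologicalType)
  (act : G -> T -> T) : Prop :=
  (forall g, continuous (act g)) /\
  forall K : set T, compact K ->
    finite_set [set g : G | (act g @` K `&` K) !=set0].

Definition cocompact_action (G : groupType) (T : topologicalType)
  (act : G -> T -> T) : Prop :=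
  exists2 K : set T, compact K &
    forall p, exists g : G, exists2 k, K k & p = act g k.

From HB Require Import structures.
From mathcomp Require Import all_boot all_order all_algebra.
From mathcomp Require Import all_classical all_reals all_analysis.
From mathcomp Require Import monoid.
From mathcomp Require Import lra.
Import Order.TTheory GRing.Theory Num.Theory numFieldNormedType.Exports.
Local Open Scope classical_set_scope.
Local Open Scope ring_scope.

(* The projection to Y is a Gamma-equivariant continuous map, so it suffices
   that such a map [phi] out of a space with a cocompact action and an
   invariant proper metric [d] sends d-bounded pairs to bounded pairs.
   Translating, we may assume the first point [k] lies in the compact set [K]
   whose translates cover; if [d k q <= C] then [q] lies in a closed d-ball
   around a base point [k0], compact by properness, on which
   [mdist (phi k0) (phi _)] is bounded.  Isometric invariance of [d] and of
   the action on Y carries the bound to arbitrary pairs. *)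

Section MetricTopology.
Context {R : realType}.

Lemma continuous_compact_ub {T : topologicalType} {f : T -> R} {A : set T} :
  continuous f -> compact A -> exists M, forall a, A a -> f a <= M.
Proof.
move=> fC /(continuous_compact (continuous_subspaceT fC)).
move=> /(@compact_bounded R R^o).
case=> M [_ /(_ (M + 1)) AM]; exists (M + 1) => a Aa.
have {}AM := AM (ltr_pwDr ltr01 (lexx M)).
exact: le_trans (ler_norm _) (AM _ (imageP f Aa)).
Qed.

Lemma mdist_is_metric (M : metricType R) : is_metric (@mdist R M).
Proof.
split; [exact: mdist_ge0 | | exact: metric_sym | exact: metric_triangle].
by move=> a b; split=> [/mdist_positivity | ->]; last exact: mdistxx.
Qed.

Lemma mdist_induces_topology (M : metricType R) :
  metric_induces_topology (@mdist R M).
Proof.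
move=> p U; split=> [/nbhs_ballP [e e0 eU] | [e e0 eU]].
  by exists e => //; rewrite -ballEmdist.
by apply/nbhs_ballP; exists e => //; rewrite ballEmdist.
Qed.

Lemma metric_dist_continuous {T : topologicalType} {d : T -> T -> R} :
  is_metric d -> metric_induces_topology d -> forall c, continuous (d c).
Proof.
move=> [_ _ dC dT] dtop c p; apply/(@cvgrPdist_lt _ R^o) => e e0.
have : nbhs p [set q | d p q < e] by apply/dtop; exists e.
apply: filterS => q /= pq; rewrite ltr_norml.
by move: (dT c p q) (dT c q p) (dC p q) pq => /=; lra.
Qed.

Lemma proper_metric_closed_ball_compact {T : topologicalType}
    {d : T -> T -> R} :
  is_metric d -> metric_induces_topology d -> proper_metric d ->
  forall c r, compact [set z | d c z <= r].
Proof.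
move=> dM dtop dP c r; apply: dP; last by exists c, r.
have /continuous_closedP dC := metric_dist_continuous dM dtop c.
exact: (dC _ (@closed_le R r)).
Qed.

End MetricTopology.

Lemma is_action_pair {G : groupType} {A B : Type}
    {actA : G -> A -> A} {actB : G -> B -> B} :
  is_action actA -> is_action actB ->
  is_action (fun g (p : A * B) => (actA g p.1, actB g p.2)).
Proof.
move=> [actA1 actAM] [actB1 actBM]; split=> [[a b] | g h [a b]] /=.
  by rewrite actA1 actB1.
by rewrite actAM actBM.
Qed.

Section CocompactEquivariant.
Context {R : realType} {G : groupType} {T : topologicalType} {Y : metricType R}.
Context {actT : G -> T -> T} {actY : G -> Y -> Y}.
Context {d : T -> T -> R} {phi : T -> Y}.
Hypothesis actT_action : is_action actT.
Hypothesis actY_isometry : forall g a b, mdist (actY g a) (actY g b) = mdist a b.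
Hypothesis phi_equivariant : forall g p, phi (actT g p) = actY g (phi p).
Hypothesis phi_continuous : continuous phi.
Hypothesis actT_cocompact : cocompact_action actT.
Hypothesis d_metric : is_metric d.
Hypothesis d_invariant : forall g p q, d (actT g p) (actT g q) = d p q.
Hypothesis d_proper : proper_metric d.
Hypothesis d_topology : metric_induces_topology d.

Lemma cocompact_equivariant_bornologous (C : R) :
  exists C', forall p q, d p q <= C -> mdist (phi p) (phi q) <= C'.
Proof.
have [K cK coverK] := actT_cocompact.
have [[k0 Kk0] | noK] := pselect (exists k, K k); last first.
  exists 0 => p q _; have [g [k Kk _]] := coverK p.
  by exfalso; apply: noK; exists k.
have [N KN] := continuous_compact_ub (metric_dist_continuous d_metric d_topology k0) cK.
have phi_dist_continuous : continuous (fun z => mdist (phi k0) (phi z)).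
  move=> z; apply: continuous_comp; first exact: phi_continuous.
  exact: metric_dist_continuous (mdist_is_metric Y) (mdist_induces_topology Y) _ _.
have [M BM] := continuous_compact_ub phi_dist_continuous
  (proper_metric_closed_ball_compact d_metric d_topology d_proper k0 (N + C)).
exists (M + M) => p q.
have [g [k Kk ->]] := coverK p.
have [actT1 actTM] := actT_action.
have -> : q = actT g (actT (g^-1)%g q) by rewrite -actTM mulgV actT1.
set q' := actT (g^-1)%g q.
rewrite d_invariant 2!phi_equivariant actY_isometry => kq.
have [d_ge0 _ _ d_triangle] := d_metric.
have Bk : d k0 k <= N + C by move: (KN k Kk) (d_ge0 k q') kq; lra.
have Bq : d k0 q' <= N + C by move: (KN k Kk) (d_triangle k0 k q') kq; lra.
move: (BM k Bk) (BM q' Bq) (metric_triangle (phi k) (phi k0) (phi q')).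
by rewrite (metric_sym (phi k) (phi k0)); lra.
Qed.

End CocompactEquivariant.

Lemma cvgry_controlled (R : realFieldType) (I : Type) (F : set_system I)
    {FF : Filter F} (a b : I -> R) :
  (forall C, exists C', forall i, a i <= C -> b i <= C') ->
  b @ F --> +oo -> a @ F --> +oo.
Proof.
move=> ab /cvgryPge bF; apply/cvgryPge => C.
have [C' abC] := ab C.
apply: filterS (bF (C' + 1)) => i bi.
by rewrite leNgt; apply/negP => /ltW /abC; lra.
Qed.

Theorem lemma6p5 (R : realType) (Gam : groupType)
  (X : metricType R) (Xh : topologicalType) (Y : metricType R)
  (iota : X -> Xh)
  (actX : Gam -> X -> X) (actXh : Gam -> Xh -> Xh) (actY : Gam -> Y -> Y)
  (dG : (Xh * Y)%type -> (Xh * Y)%type -> R) :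
  isometric_action actX ->
  isometric_action actY ->
  partial_compactification iota ->
  is_action actXh ->
  (forall g a, actXh g (iota a) = iota (actX g a)) ->
  proper_action (fun g (p : (Xh * Y)%type) => (actXh g p.1, actY g p.2)) ->
  cocompact_action (fun g (p : (Xh * Y)%type) => (actXh g p.1, actY g p.2)) ->
  is_metric dG ->
  (forall g p q, dG (actXh g p.1, actY g p.2) (actXh g q.1, actY g q.2)
                 = dG p q) ->
  proper_metric dG ->
  metric_induces_topology dG ->
  forall (x x' : nat -> Xh) (y y' : nat -> Y),
    (fun i => mdist (y i) (y' i)) @ \oo --> +oo ->
    (fun i => dG (x i, y i) (x' i, y' i)) @ \oo --> +oo.
Proof.
move=> _ [actY_action actY_isometry] _ actXh_action _ _ cocompact dG_metric
  dG_invariant dG_proper dG_topology x x' y y'.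
apply: cvgry_controlled => C.
have snd_continuous : continuous (@snd Xh Y) by move=> p; exact: cvg_snd.
have [C' bornologous] := cocompact_equivariant_bornologous (phi := snd)
  (is_action_pair actXh_action actY_action) actY_isometry (fun _ _ => erefl)
  snd_continuous cocompact dG_metric dG_invariant dG_proper dG_topology C.
by exists C' => i /bornologous.
Qed.
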